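(* Let $(R,v)$ be a discrete valuation domain and let $f=a_0+a_1x+\cdots+a_nx^n\in R[x]$ with $n\ge 2$ and $a_0a_n\neq 0$. Suppose there is an index $s\in\{0,1,\ldots,n-1\}$ such that: (a) $m_i(f)<m_s(f)$ for all $i\in\{0,1,\ldots,n-1\}$ with $i\neq s$; (b) the integer $d=\gcd\bigl(v(a_s)-v(a_n),\,n-s\bigr)$ satisfies $d=n(n-s)\bigl(m_s(f)-m_0(f)\bigr)$ if $s\neq 0$, and $d=1$ if $s=0$. Then either $f$ is irreducible in $R[x]$, or $f$ has a factor in $R[x]$ whose degree is zero or a multiple of $(n-s)/d$. Precisely: whenever $f=f_1f_2$ with $f_1,f_2\in R[x]$, the integer $(n-s)/d$ divides $\deg f_1$ or $\deg f_2$.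
   Context: $(R,v)$ is a discrete valuation domain with (discrete) valuation $v$, extended by $v(0)=+\infty$. For a polynomial $f=a_0+a_1x+\cdots+a_nx^n\in R[x]$ of degree $n$ (so $a_n\ne 0$) and $i\in\{0,\ldots,n-1\}$, define $m_i(f)=\dfrac{v(a_n)-v(a_i)}{n-i}$ (the slope of the segment joining $(i,v(a_i))$ and $(n,v(a_n))$; it equals $-\infty$ if $a_i=0$). *)

From HB Require Import structures.
From mathcomp Require Import all_boot all_order all_algebra.
Set Implicit Arguments. Unset Strict Implicit. Unset Printing Implicit Defensive.
Import Order.TTheory GRing.Theory Num.Theory.
Local Open Scope ring_scope.

(* A discrete valuation domain (R, v): R is an integral domain and
   v : R -> nat is a (normalized) discrete valuation on the nonzero elements
   (the value v 0 is irrelevant; it plays the role of +oo and is never used),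
   such that R is exactly the valuation ring: v b <= v a implies b | a. *)
Definition is_dvr (R : idomainType) (v : R -> nat) : Prop :=
  [/\ (forall x y : R, x != 0 -> y != 0 -> v (x * y) = addn (v x) (v y)),
      (forall x y : R, x != 0 -> y != 0 -> x + y != 0 ->
         leq (minn (v x) (v y)) (v (x + y))),
      (forall x y : R, x != 0 -> y != 0 -> leq (v y) (v x) ->
         exists z : R, x = y * z)
    & exists p : R, p != 0 /\ v p = 1%N].

(* Extended rationals for slopes: None stands for -oo. *)
Definition ext_lt (a b : option rat) : bool :=
  match a, b with
  | None, Some _ => true
  | Some x, Some y => x < y
  | _, _ => false
  end.

(* m_i(f) = (v(a_n) - v(a_i)) / (n - i), with -oo when a_i = 0. *)
Definition slope (R : idomainType) (v : R -> nat) (f : {poly R}) (i : nat)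
  : option rat :=
  if f`_i == 0 then None
  else Some (((v (lead_coef f))%:R - (v f`_i)%:R) / ((size f).-1 - i)%N%:R).

From HB Require Import structures.
From mathcomp Require Import all_boot all_order all_algebra.
From mathcomp Require Import zify ring lra.
Import Order.TTheory GRing.Theory Num.Theory.
Local Open Scope ring_scope.

(* Put n = deg f, G = n - s, E = v(a_s) - v(a_n), and give a coefficient c in
   degree j the weight wt(c, j) = G v(c) + E j, so that the line through
   (s, v a_s) and (n, v a_n) is a level line of the weight.
   - Hypothesis (a) says that every nonzero term of f has weight at least that
     of the leading term; hypothesis (b) says that the weight gap
     wt(a_0, 0) - wt(a_n, n) is at most d = gcd(E, G).
   - A Gauss lemma for the weight (the first terms of minimal weight of two
     polynomials multiply to a dominant term of their product) shows that both
     factors of f = f1 f2 inherit the first property; so their gaps are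
     nonnegative, and they add up to the gap of f.
   - Every weight is a multiple of d, hence one of the two gaps vanishes, and a
     vanishing gap G v(c) = G v(l) + E deg forces G / d to divide the degree. *)

Lemma dvdn_div_gcd (G E k : int) (m : nat) : G != 0 -> G * k = E * m%:Z ->
  (`|G| %/ gcdn `|E| `|G| %| m)%N.
Proof.
move=> G0 /(congr1 absz); rewrite !abszM /= => eq_abs.
have g0 : (0 < gcdn `|E| `|G|)%N by rewrite gcdn_gt0 !absz_gt0 G0 orbT.
rewrite dvdn_divLR ?dvdn_gcdr // mulnC muln_gcdl dvdn_gcd -eq_abs.
by rewrite !dvdn_mulr.
Qed.

Lemma dvdz_small_sum {d a b : int} : 0 < d -> (d %| a)%Z -> (d %| b)%Z ->
  0 <= a -> 0 <= b -> a + b <= d -> a = 0 \/ b = 0.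
Proof.
move=> d0 da db a0 b0 ab_le.
have big (c : int) : (d %| c)%Z -> 0 < c -> d <= c.
  move=> dc c0; rewrite -(gtz0_abs d0) -(gtz0_abs c0) lez_nat.
  by apply: dvdn_leq; [rewrite absz_gt0 gt_eqF | rewrite -dvdzE].
case: (ltrgt0P a) a0 => // [a_pos _|->]; last by left.
by right; have := big a da a_pos; lra.
Qed.

Section Valuation.
Context {R : idomainType} {v : R -> nat} (hv : is_dvr v).

Lemma dvr_mul {x y : R} : x != 0 -> y != 0 -> v (x * y) = (v x + v y)%N.
Proof. by case: hv => hmul _ _ _; apply: hmul. Qed.

Lemma dvr_ultra {x y : R} : x != 0 -> y != 0 -> x + y != 0 ->
  (minn (v x) (v y) <= v (x + y))%N.
Proof. by case: hv => _ hultra _ _; apply: hultra. Qed.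

(* The sign units have valuation 0: v 1 = 0, hence v (- x) = v x. *)
Lemma dvr_opp (x : R) : x != 0 -> v (- x) = v x.
Proof.
move=> x0; have n1 : (-1 : R) != 0 by rewrite oppr_eq0 oner_neq0.
have v1 : v 1 = 0%N.
  by have := @dvr_mul 1 1 (oner_neq0 _) (oner_neq0 _); rewrite mulr1; lia.
have := dvr_mul n1 n1; rewrite mulrNN mulr1 v1 => vN1.
by rewrite -mulN1r dvr_mul //; lia.
Qed.

Lemma dvr_add_gt {x y : R} : x != 0 -> y != 0 -> (v x < v y)%N ->
  x + y != 0 /\ v (x + y) = v x.
Proof.
move=> x0 y0 lt_xy.
have xy0 : x + y != 0.
  apply: contraTneq lt_xy => /eqP; rewrite addr_eq0 => /eqP ->.
  by rewrite dvr_opp // ltnn.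
split=> //; have le1 := dvr_ultra x0 y0 xy0.
have Ny0 : - y != 0 by rewrite oppr_eq0.
have := @dvr_ultra (x + y) (- y) xy0 Ny0; rewrite addrK dvr_opp // => /(_ x0).
lia.
Qed.

Lemma dvr_sum_gt {I : Type} {r : seq I} {P : pred I} {F : I -> R} {k : nat} :
  (forall i, P i -> F i != 0 -> (k < v (F i))%N) ->
  \sum_(i <- r | P i) F i != 0 -> (k < v (\sum_(i <- r | P i) F i))%N.
Proof.
move=> hF; apply: (big_ind (fun y => y != 0 -> (k < v y)%N));
  [by rewrite eqxx | | exact: hF].
move=> a b ha hb ab0.
have [a0|a0] := eqVneq a 0; first by move: ab0; rewrite a0 add0r; apply: hb.
have [b0|b0] := eqVneq b 0; first by move: ab0; rewrite b0 addr0; apply: ha.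
by move: (dvr_ultra a0 b0 ab0) (ha a0) (hb b0); lia.
Qed.

Lemma dvr_dominant {I : Type} {r : seq I} {P : pred I} {F : I -> R} {x : R} :
  x != 0 -> (forall i, P i -> F i != 0 -> (v x < v (F i))%N) ->
  x + \sum_(i <- r | P i) F i != 0 /\ v (x + \sum_(i <- r | P i) F i) = v x.
Proof.
move=> x0 hF; have [->|s0] := eqVneq (\sum_(i <- r | P i) F i) 0; first by rewrite addr0.
exact: dvr_add_gt x0 s0 (dvr_sum_gt hF s0).
Qed.

Section NewtonWeight.
Context {G E : int} (G_gt0 : 0 < G).

(* The weight of the point (j, v c) w.r.t. the direction of a Newton segment:
   points on a line of slope -E/G have equal weight. *)
Definition wt (c : R) (j : nat) : int := G * (v c)%:Z + E * j%:Z.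

Lemma wt_mul {x y : R} (j k : nat) : x != 0 -> y != 0 ->
  wt (x * y) (j + k) = wt x j + wt y k.
Proof. by move=> x0 y0; rewrite /wt dvr_mul // !PoszD; ring. Qed.

Lemma wt_lt_val (x y : R) (j : nat) : wt x j < wt y j -> (v x < v y)%N.
Proof. by rewrite /wt ltrD2r ltr_pM2l // ltz_nat. Qed.

Definition first_min_wt (p : {poly R}) (i : nat) : Prop := [/\ p`_i != 0,
  forall j, p`_j != 0 -> wt p`_i i <= wt p`_j j &
  forall j, (j < i)%N -> p`_j != 0 -> wt p`_i i < wt p`_j j].

Lemma exists_first_min_wt {p : {poly R}} : p != 0 -> exists i, first_min_wt p i.
Proof.
move=> p0; have sz : ((size p).-1 < size p)%N by rewrite prednK ?size_poly_gt0.
have top0 : p`_(Ordinal sz) != 0 by rewrite -lead_coefE lead_coef_eq0.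
case: (@arg_minP _ _ _ (Ordinal sz) (fun j : 'I_(size p) => p`_j != 0)
  (fun j => wt p`_j j) top0) => k pk kmin.
have k_min j : p`_j != 0 -> wt p`_k k <= wt p`_j j.
  move=> pj; have jsz : (j < size p)%N.
    by rewrite ltnNge; apply: contra pj => /leq_sizeP/(_ j (leqnn j))/eqP.
  exact: (kmin (Ordinal jsz)).
have ex_min : exists i, (p`_i != 0) && (wt p`_i i == wt p`_k k).
  by exists k; rewrite pk eqxx.
case: (ex_minnP ex_min) => i /andP[pi /eqP wi] i_first.
exists i; split=> // [j|j lt_ji pj]; first by rewrite wi; apply: k_min.
rewrite lt_neqAle wi k_min // andbT; apply: contraTneq lt_ji => wj.
by rewrite -leqNgt i_first // pj -wj eqxx.
Qed.

Lemma wt_gauss {p q : {poly R}} {i1 i2 : nat} :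
  first_min_wt p i1 -> first_min_wt q i2 ->
  (p * q)`_(i1 + i2) != 0 /\
  wt (p * q)`_(i1 + i2) (i1 + i2) = wt p`_i1 i1 + wt q`_i2 i2.
Proof.
move=> [p1 p_min p_first] [q2 q_min q_first].
have hi : (i1 < (i1 + i2).+1)%N by rewrite ltnS leq_addr.
have x0 : p`_i1 * q`_i2 != 0 by rewrite mulf_neq0.
rewrite coefM (bigD1 (Ordinal hi)) //= addKn -wt_mul //.
have other_terms (j : 'I_(i1 + i2).+1) : j != Ordinal hi ->
    p`_j * q`_(i1 + i2 - j) != 0 -> (v (p`_i1 * q`_i2) < v (p`_j * q`_(i1 + i2 - j)))%N.
  case: j => j /= jn ne_j; rewrite mulf_eq0 negb_or => /andP[pj qj].
  apply: (@wt_lt_val _ _ (i1 + i2)).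
  rewrite -[X in _ < wt _ X](subnKC (_ : j <= i1 + i2)%N) //.
  rewrite !wt_mul // ?mulf_neq0 //.
  have ne_ji : j != i1 by apply: contraNneq ne_j => e; apply/eqP/val_inj.
  case: (ltngtP j i1) ne_ji => // [lt_ji|lt_ij] _.
    by apply: ltr_leD; [apply: p_first | apply: q_min].
  by apply: ler_ltD; [apply: p_min | apply: q_first => //; lia].
have [c0 vc] :=
  dvr_dominant (r := index_enum _) (P := fun j => j != Ordinal hi) x0 other_terms.
by split=> //; rewrite /wt vc.
Qed.

(* The leading term has minimal weight: the lower Newton boundary of p in the
   direction of the weight ends with a segment through the leading term. *)
Definition lead_wt_min (p : {poly R}) : Prop :=
  forall j, p`_j != 0 -> wt (lead_coef p) (size p).-1 <= wt p`_j j.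

Lemma wt_lead_mul (p q : {poly R}) : p != 0 -> q != 0 ->
  wt (lead_coef (p * q)) (size (p * q)).-1 =
  wt (lead_coef p) (size p).-1 + wt (lead_coef q) (size q).-1.
Proof.
move=> p0 q0; rewrite lead_coefM -wt_mul ?lead_coef_eq0 // size_mul //.
by congr (wt _ _); move: (size_poly_gt0 p) (size_poly_gt0 q); rewrite p0 q0; lia.
Qed.

Lemma lead_wt_min_mull {p q : {poly R}} : p * q != 0 ->
  lead_wt_min (p * q) -> lead_wt_min p.
Proof.
rewrite mulf_eq0 negb_or => /andP[p0 q0] pq_min j pj.
have [i1 p_first] := exists_first_min_wt p0.
have [i2 q_first] := exists_first_min_wt q0.
have [c0 wc] := wt_gauss p_first q_first.
case: p_first => _ p_min _; case: q_first => _ q_min _.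
have := pq_min _ c0; rewrite wc wt_lead_mul // => top_le.
have := p_min j pj; have := q_min (size q).-1; rewrite -lead_coefE lead_coef_eq0.
by move=> /(_ q0); lra.
Qed.

Definition wt_gap (p : {poly R}) : int := wt p`_0 0 - wt (lead_coef p) (size p).-1.

Lemma wt_gap_ge0 {p : {poly R}} : lead_wt_min p -> p`_0 != 0 -> 0 <= wt_gap p.
Proof. by move=> p_min p0; rewrite subr_ge0; apply: p_min. Qed.

Lemma wt_gap_mul {p q : {poly R}} : p`_0 != 0 -> q`_0 != 0 ->
  wt_gap (p * q) = wt_gap p + wt_gap q.
Proof.
move=> p0 q0; have pn0 : p != 0 by apply: contraNneq p0 => ->; rewrite coef0.
have qn0 : q != 0 by apply: contraNneq q0 => ->; rewrite coef0.
rewrite /wt_gap coef0M wt_lead_mul //.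
by have := wt_mul 0 0 p0 q0; rewrite addn0 => ->; ring.
Qed.

Lemma dvdz_wt_gap {d : int} (p : {poly R}) : (d %| G)%Z -> (d %| E)%Z ->
  (d %| wt_gap p)%Z.
Proof. by move=> dG dE; rewrite /wt_gap !rpredB ?rpredD ?dvdz_mulr. Qed.

Lemma wt_gap_eq0_dvd {p : {poly R}} : wt_gap p = 0 ->
  (`|G| %/ gcdn `|E| `|G| %| (size p).-1)%N.
Proof.
rewrite /wt_gap /wt => gap0.
apply: (@dvdn_div_gcd G E ((v p`_0)%:Z - (v (lead_coef p))%:Z)).
  by rewrite gt_eqF.
by lra.
Qed.

End NewtonWeight.
End Valuation.

Arguments wt {R} v G E c j.
Arguments lead_wt_min {R} v G E p.
Arguments wt_gap {R} v G E p.

Lemma slope_lt_cross {a b c x y : nat} : (0 < x)%N -> (0 < y)%N ->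
  (a%:R - b%:R) / x%:R < (a%:R - c%:R) / y%:R :> rat ->
  (a%:Z - b%:Z) * y%:Z < (a%:Z - c%:Z) * x%:Z.
Proof.
move=> x0 y0; rewrite ltr_pdivrMr ?ltr0n // mulrAC ltr_pdivlMr ?ltr0n // => lt_cross.
by rewrite -(ltr_int rat) !(rmorphB, rmorphM).
Qed.

(* Under (a) with n >= 2, the coefficient a_s is nonzero: the slope m_s(f)
   strictly dominates some other slope, so it is not -oo. *)
Lemma slope_max_coef_neq0 {R : idomainType} {v : R -> nat} {f : {poly R}} {s : nat} :
  (2 <= (size f).-1)%N -> (s < (size f).-1)%N ->
  (forall i, (i < (size f).-1)%N -> i != s -> ext_lt (slope v f i) (slope v f s)) ->
  f`_s != 0.
Proof.
move=> n_ge2 s_lt slopes; apply/negP => /eqP fs0.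
pose i : nat := if s == 0%N then 1 else 0.
have i_lt : (i < (size f).-1)%N by rewrite /i; case: ifP => _; apply: leq_trans n_ge2.
have i_ne : i != s by rewrite /i; case: (eqVneq s 0%N) => [->|s0] //; rewrite eq_sym.
by have := slopes i i_lt i_ne; rewrite {2}/slope fs0 eqxx; case: (slope v f i).
Qed.

Section Slopes.
Context {R : idomainType} {v : R -> nat} {f : {poly R}} {s : nat}.
Let n := (size f).-1.
Let G : int := (n - s)%N%:Z.
Let E : int := (v f`_s)%:Z - (v (lead_coef f))%:Z.
Context (s_lt_n : (s < n)%N) (fs_neq0 : f`_s != 0).

Lemma wt_lead_eq_s : wt v G E (lead_coef f) n = wt v G E f`_s s.
Proof. by rewrite /wt /G /E -subzn 1?ltnW //; ring. Qed.

Lemma slope_lt_wt (i : nat) : (i < n)%N -> f`_i != 0 ->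
  ext_lt (slope v f i) (slope v f s) -> wt v G E (lead_coef f) n < wt v G E f`_i i.
Proof.
move=> i_lt fi; rewrite /slope (negbTE fi) (negbTE fs_neq0) /= -/n.
have ni0 : (0 < n - i)%N by rewrite subn_gt0.
have ns0 : (0 < n - s)%N by rewrite subn_gt0.
by move/(slope_lt_cross ni0 ns0); rewrite /wt /G /E -!subzn 1?ltnW //; lra.
Qed.

Lemma slope_max_lead_wt_min :
  (forall i, (i < n)%N -> i != s -> ext_lt (slope v f i) (slope v f s)) ->
  lead_wt_min v G E f.
Proof.
move=> slopes j fj; case: (ltngtP j n) => [j_lt | j_gt | ->].
- have [->|j_ne] := eqVneq j s; first by rewrite wt_lead_eq_s.
  exact/ltW/slope_lt_wt/slopes.
- by move: fj; rewrite nth_default ?eqxx //; apply: leq_trans (leqSpred _) j_gt.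
- by rewrite lead_coefE.
Qed.

Lemma slope_diff_wt_gap {d : nat} : (0 < s)%N ->
  match slope v f s, slope v f 0 with
  | Some ms, Some m0 => (d%:R : rat) = (n * (n - s))%N%:R * (ms - m0)
  | _, _ => False end ->
  wt_gap v G E f = d%:Z.
Proof.
move=> s_gt0; rewrite /slope (negbTE fs_neq0) /=; case: ifP => // _ /= hd.
have n0 : (n%:R : rat) != 0 by rewrite pnatr_eq0 -lt0n (leq_ltn_trans _ s_lt_n).
have ns0 : ((n - s)%N%:R : rat) != 0 by rewrite pnatr_eq0 -lt0n subn_gt0.
apply: (@intr_inj rat); rewrite (_ : d%:Z%:~R = d%:R :> rat) // hd subn0.
rewrite /wt_gap /wt /G /E !(rmorphB, rmorphD, rmorphM) /= -!pmulrn -/n.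
by field; rewrite n0 ns0.
Qed.

Lemma slope_hyp_wt_gap_le {d : nat} :
  (if s != 0%N then
     match slope v f s, slope v f 0 with
     | Some ms, Some m0 => (d%:R : rat) = (n * (n - s))%N%:R * (ms - m0)
     | _, _ => False end
   else d = 1%N) ->
  wt_gap v G E f <= d%:Z.
Proof.
case: (posnP s) => [s0 _ | s_gt0]; first by rewrite /wt_gap wt_lead_eq_s s0 subrr.
by move=> /= /(slope_diff_wt_gap s_gt0) ->.
Qed.
End Slopes.

Theorem theorem1 (R : idomainType) (v : R -> nat) (hv : is_dvr v)
  (f : {poly R}) (s : nat) :
  (2 <= (size f).-1)%N ->
  f`_0 * lead_coef f != 0 ->
  (s < (size f).-1)%N ->
  (forall i : nat, (i < (size f).-1)%N -> i != s ->
     ext_lt (slope v f i) (slope v f s)) ->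
  (let n := (size f).-1 in
   let d := gcdn `|((v f`_s)%:Z - (v (lead_coef f))%:Z)%R|%N (n - s) in
   (if s != 0%N then
      match slope v f s, slope v f 0 with
      | Some ms, Some m0 => (d%:R : rat) = (n * (n - s))%N%:R * (ms - m0)
      | _, _ => False end
    else d = 1%N) ->
   forall f1 f2 : {poly R}, f = f1 * f2 ->
     ((n - s) %/ d %| (size f1).-1)%N \/ ((n - s) %/ d %| (size f2).-1)%N).
Proof.
move=> n_ge2 f0_an s_lt slopes n d hyp_b f1 f2 def_f.
set G : int := (n - s)%N%:Z; set E : int := (v f`_s)%:Z - (v (lead_coef f))%:Z.
have G_gt0 : 0 < G by rewrite ltz_nat subn_gt0.
have fs0 := slope_max_coef_neq0 n_ge2 s_lt slopes.
have f_min : lead_wt_min v G E f := slope_max_lead_wt_min s_lt fs0 slopes.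
have gap_le : wt_gap v G E f <= d%:Z := slope_hyp_wt_gap_le s_lt fs0 hyp_b.
have [f10 f20] : f1`_0 != 0 /\ f2`_0 != 0.
  apply/andP; rewrite -negb_or -mulf_eq0 -coef0M -def_f.
  by apply: contraNneq f0_an => ->; rewrite mul0r.
have f12 : f1 * f2 != 0.
  by rewrite -def_f -lead_coef_eq0; apply: contraNneq f0_an => ->; rewrite mulr0.
have f1_min : lead_wt_min v G E f1.
  by apply: (lead_wt_min_mull hv G_gt0 f12); rewrite -def_f.
have f2_min : lead_wt_min v G E f2.
  have f21 : f2 * f1 != 0 by rewrite mulrC.
  by apply: (lead_wt_min_mull hv G_gt0 f21); rewrite mulrC -def_f.
have d_gt0 : (0 < d)%N by rewrite gcdn_gt0 subn_gt0 s_lt orbT.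
have [dG dE] : (d%:Z %| G)%Z /\ (d%:Z %| E)%Z by rewrite !dvdzE dvdn_gcdr dvdn_gcdl.
have gap_sum : wt_gap v G E f1 + wt_gap v G E f2 <= d%:Z.
  by rewrite -(wt_gap_mul hv) // -def_f.
have [gap0|gap0] := dvdz_small_sum (d_gt0 : 0 < d%:Z) (dvdz_wt_gap f1 dG dE)
  (dvdz_wt_gap f2 dG dE) (wt_gap_ge0 f1_min f10) (wt_gap_ge0 f2_min f20) gap_sum.
- by left; have := wt_gap_eq0_dvd G_gt0 gap0.
- by right; have := wt_gap_eq0_dvd G_gt0 gap0.
Qed.
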